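(* Let $I$ be a set of players, for each $i\in I$ let $G_i$ be a compact convex subset of a Hausdorff locally convex topological vector space, and let $G=(G_i,P_i,Q_i)_{i\in I}$ be a general qualitative game satisfying property $T$, where $P_i,Q_i:\prod_{j\in I}G_j\to 2^{G_i}$ satisfy for each $i\in I$: (i) $y_i\in Q_i(y_i,x_{-i})$ for each $y_i\in G_i$ and each $x_{-i}\in G_{-i}$; (ii) $Q_i$ has convex closed values; (iii) $P_i(\cdot,x_{-i}):G_i\to 2^{G_i}$ is $L_S$-majorized on $G_i$ for each $x_{-i}\in G_{-i}$, where $S$ is the identity of $G_i$. Then: (a) if $G\to^* H$ and there exist $i\in I$ and $x_i,y_i\in G_i$ with $y_i\succ_H x_i$, then there exists $x_i^*\in H_i$ such that $x_i^*\succ_H x_i$ and $z_i\not\succ_H x_i^*$ for all $z_i\in G_i$; (b) if $M$ is a nonempty maximal $(\to^* )$-reduction of $G$, then $M$ is the unique maximal $(\to^* )$-reduction of $G$.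
   Context: $I$ is a nonempty set; $X=\prod_{j\in I}G_j$, $G_{-i}=\prod_{j\ne i}G_j$, $x=(x_i,x_{-i})$. A general qualitative game is $G=(G_i,P_i,Q_i)_{i\in I}$ with correspondences $P_i,Q_i:X\to 2^{G_i}$. It satisfies property $T$ if for each $i$ and each $x\in X$: $P_i(x)\subseteq Q_i(x)$, and $y_i\in P_i(x)$ implies $Q_i(y_i,x_{-i})\subseteq P_i(x)$. A pairing of $G$ is a family $H=(H_i)_{i\in I}$ with $H_i\subseteq G_i$ (the $P_i$ restricted to $\prod_jH_j$); $H_{-i}=\prod_{j\ne i}H_j$; $H$ is nonempty if every $H_i\neq\emptyset$. For $x_i,y_i\in G_i$: $y_i\succ_H x_i$ iff $H_{-i}\neq\emptyset$ and $y_i\in P_i(x_i,x_{-i})$ for all $x_{-i}\in H_{-i}$. For pairings $R,S$ with $S_i\subseteq R_i$ for all $i$: $R\to S$ means for every $i$ and $x_i\in R_i\setminus S_i$, $\bigcap_{x_{-i}\in R_{-i}}P_i(x_i,x_{-i})\ne\emptyset$; it is fast if moreover for every $i$ and $x_i\in R_i$, $\bigcap_{x_{-i}\in R_{-i}}P_i(x_i,x_{-i})\neq\emptyset$ implies $x_i\notin S_i$. $G\to^*H$ means there is a finite or countably infinite sequence of pairings $R^0=G,R^1,\dots$ with $R^t\to R^{t+1}$ fast for each $t$ and $H_i=\bigcap_tR^t_i$ for each $i$. $H$ is a maximal $(\to^* )$-reduction of $G$ if $G\to^*H$ and, for pairings $H'$ with $H'_i\subseteq H_i$, $H\to H'$ holds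 only for $H'=H$. A correspondence $F:G_i\to2^{G_i}$ is $L_S$-majorized ($S$ the identity) if for each $x\in G_i$ there exist an open neighbourhood $N(x)$ of $x$ in $G_i$ and a correspondence with convex values $B_x:G_i\to 2^{G_i}$ such that $F(z)\subseteq B_x(z)$ for each $z\in N(x)$, $y\notin B_x(y)$ for each $y\in G_i$, and $B_x^{-1}(y)=\{z\in G_i: y\in B_x(z)\}$ is open in $G_i$ for each $y\in G_i$. *)

From HB Require Import structures.
From mathcomp Require Import all_boot all_order all_algebra.
From mathcomp Require Import all_classical all_reals all_analysis.
Set Implicit Arguments. Unset Strict Implicit. Unset Printing Implicit Defensive.
Import Order.TTheory GRing.Theory Num.Theory.
Local Open Scope classical_set_scope.
Local Open Scope ring_scope.

Section QualGame.
Variables (R : realType) (I : Type) (E : I -> tvsType R).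

Definition profile := forall j, E j.

(* (y_i, x_{-i}) : replace the i-th coordinate of x by y *)
Definition upd (x : profile) (i : I) (y : E i) : profile :=
  fun j => match pselect (i = j) with
           | left e => eq_rect i E y j e
           | right _ => x j
           end.

(* x_{-i} \in H_{-i} (the i-th coordinate of x is a dummy) *)
Definition in_minus (H : forall j, set (E j)) (i : I) (x : profile) :=
  forall j, j <> i -> H j (x j).

Definition in_prod (H : forall j, set (E j)) (x : profile) := forall j, H j (x j).

Definition propertyT (G : forall j, set (E j)) (P Q : forall i, profile -> set (E i)) :=
  forall i x, in_prod G x ->
    P i x `<=` Q i x /\
    (forall y, P i x y -> Q i (upd x y) `<=` P i x).

Definition pairing (G H : forall j, set (E j)) := forall i, H i `<=` G i.

Definition nonempty_pairing (H : forall j, set (E j)) := forall i, H i !=set0.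

Definition succH (P : forall i, profile -> set (E i)) (H : forall j, set (E j))
    (i : I) (y x : E i) :=
  (exists z : profile, in_minus H i z) /\
  (forall z : profile, in_minus H i z -> P i (upd z x) y).

Definition bigcap_nonempty (G : forall j, set (E j))
    (P : forall i, profile -> set (E i)) (Rr : forall j, set (E j)) (i : I) (x : E i) :=
  exists y, G i y /\ forall z : profile, in_minus Rr i z -> P i (upd z x) y.

Definition reduces G P (Rr S : forall j, set (E j)) :=
  (forall i, S i `<=` Rr i) /\
  (forall i x, Rr i x -> ~ S i x -> bigcap_nonempty G P Rr x).

Definition reduces_fast G P (Rr S : forall j, set (E j)) :=
  reduces G P Rr S /\
  (forall i x, Rr i x -> bigcap_nonempty G P Rr x -> ~ S i x).

(* index set of a finite (len = Some n : R^0..R^n) or countably infinite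
   (len = None) sequence *)
Definition in_seq (len : option nat) (t : nat) : Prop :=
  match len with None => True | Some n => (t <= n)%N end.

Definition reduces_star G P (H : forall j, set (E j)) :=
  exists (len : option nat) (Rs : nat -> forall j, set (E j)),
    Rs 0%N = G /\
    (forall t, in_seq len t.+1 -> reduces_fast G P (Rs t) (Rs t.+1)) /\
    (forall i, H i = [set y | forall t, in_seq len t -> Rs t i y]).

Definition maximal_reduction G P (H : forall j, set (E j)) :=
  pairing G H /\ reduces_star G P H /\
  (forall H' : forall j, set (E j), pairing G H' -> (forall i, H' i `<=` H i) ->
     reduces G P H H' -> H' = H).

End QualGame.

(* L_S-majorized with S the identity, on the domain D (with the subspace
   topology of D inside the tvs M) *)
Definition LS_majorized (R : realType) (M : tvsType R) (D : set M)
    (F : M -> set M) :=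
  forall x, D x ->
    exists (U : set M) (B : M -> set M),
      open U /\ U x /\
      (forall z, D z -> B z `<=` D /\ convex_set (B z : set (convex_lmodType M))) /\
      (forall z, D z -> U z -> F z `<=` B z) /\
      (forall y, D y -> ~ B y y) /\
      (forall y, D y -> exists V : set M, open V /\
          [set z | D z /\ B z y] = V `&` D).

From HB Require Import structures.
From mathcomp Require Import all_boot all_order all_algebra.
From mathcomp Require Import all_classical all_reals all_analysis.
Local Open Scope classical_set_scope.
Local Open Scope ring_scope.
Set Implicit Arguments. Unset Strict Implicit.

(* (a) Strict domination y >_H x is a strict partial order on G_i: property T
   makes it transitive and L_S-majorization (y is never in B_x(y)) makes it
   irreflexive.  Along a >_H-chain the closed sets
   G_i /\ \bigcap_{z in H_{-i}} Q_i(w, z) have the finite intersection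
   property, since the top of a finite subchain lies in all of them; by
   compactness some v lies in all of them, and then property T makes v
   dominate the whole chain.  Zorn's lemma yields a >_H-maximal x_i* above
   x_i, and an undominated strategy is never eliminated along G ->* H, so
   x_i* is in H_i.
   (b) No strategy of a maximal reduction M is eliminable, so M survives every
   stage of any G ->* H; two maximal reductions thus contain each other. *)

Lemma total_seq_max (T : eqType) (D : set T) (le : T -> T -> Prop) :
  (forall x y z, D x -> D y -> D z -> le x y -> le y z -> le x z) ->
  total_on D le ->
  forall s : seq T, (forall w, w \in s -> D w) -> s != [::] ->
  exists2 m, m \in s & forall w, w \in s -> le w m.
Proof.
move=> le_trans le_total; elim=> [//|a s IHs] sD _.
have Da : D a by apply: sD; rewrite mem_head.
have le_aa : le a a by case: (le_total a a Da Da).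
have [->|s_neq0] := eqVneq s [::].
  by exists a; [rewrite mem_head|move=> w; rewrite mem_seq1 => /eqP ->].
have [m ms m_max] := IHs (fun w ws => sD w (mem_behead (s := a :: s) ws)) s_neq0.
have Dm : D m by apply: sD; rewrite in_cons ms orbT.
have [le_am|le_ma] := le_total a m Da Dm.
  exists m; first by rewrite in_cons ms orbT.
  by move=> w; rewrite in_cons => /orP[/eqP ->|/m_max].
exists a; first exact: mem_head.
move=> w; rewrite in_cons => /orP[/eqP -> //|ws].
apply: (le_trans w m a) => //; last exact: m_max.
by apply: sD; rewrite in_cons ws orbT.
Qed.

Lemma compact_bigcap_neq0 (T : topologicalType) (A : set T) (I : choiceType)
    (D : set I) (g : I -> set T) :
  compact A -> (forall i, D i -> closed (g i)) -> D !=set0 ->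
  finI D (fun i => A `&` g i) -> \bigcap_(i in D) (A `&` g i) !=set0.
Proof.
move=> cA g_closed [i Di] finIAg.
have [|p [Ap p_cl]] := cA _ (finI_filter finIAg).
  by exists (A `&` g i); [apply: finI_from1|move=> ? []].
exists p => j Dj; split => //; apply: g_closed => // B nB.
have [q [[_ gq] Bq]] : (A `&` g j) `&` B !=set0.
  by apply: p_cl nB; exists (A `&` g j); [apply: finI_from1|].
by exists q.
Qed.

Lemma LS_majorized_irrefl (R : realType) (M : tvsType R) (D : set M)
    (F : M -> set M) (x : M) :
  LS_majorized D F -> D x -> ~ F x x.
Proof.
move=> majF Dx Fxx; have [U [B [_ [Ux [_ [FB [B_irrefl _]]]]]]] := majF x Dx.
exact: B_irrefl x Dx (FB x Dx Ux x Fxx).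
Qed.

Lemma total_on_nomax (T : Type) (A : set T) (le : T -> T -> Prop) :
  total_on A le -> ~ (exists m, A m /\ forall s, A s -> le s m) ->
  forall s, A s -> exists2 s', A s' & le s s' /\ ~ le s' s.
Proof.
move=> A_chain no_max s As; apply: contrapT => s_max; apply: no_max.
exists s; split=> // s' As'; apply: contrapT => s's.
by have [ss'|//] := A_chain s s' As As'; apply: s_max; exists s'.
Qed.

Lemma in_seqS len t : in_seq len t.+1 -> in_seq len t.
Proof. by case: len => //= n; apply: ltnW. Qed.

Section Profiles.
Variables (R : realType) (I : Type) (E : I -> tvsType R).
Implicit Types (G H : forall i, set (E i)) (z : profile E).

Lemma upd_upd z i (a b : E i) : upd (upd z a) b = upd z b.
Proof.
apply: functional_extensionality_dep => j; rewrite /upd.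
by case: pselect => // ne; case: pselect.
Qed.

Lemma in_prod_upd G i z (a : E i) :
  in_minus G i z -> G i a -> in_prod G (upd z a).
Proof.
move=> Gz Ga j; rewrite /upd; case: pselect => [e|ne]; first by case: j / e.
by apply: Gz => e; apply: ne.
Qed.

Lemma in_minus_pairing G H i z : pairing G H -> in_minus H i z -> in_minus G i z.
Proof. by move=> GH Hz j ji; apply/GH/Hz. Qed.

End Profiles.

Section Reductions.
Variables (R : realType) (I : Type) (E : I -> tvsType R).
Variables (G : forall i, set (E i)) (P : forall i, profile E -> set (E i)).
Arguments G : clear implicits.

Lemma bigcap_nonempty_sub (Rr S : forall j, set (E j)) i (x : E i) :
  (forall j, S j `<=` Rr j) ->
  bigcap_nonempty G P Rr x -> bigcap_nonempty G P S x.
Proof.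
by move=> SRr [y [Gy Py]]; exists y; split => // z Sz; apply: Py => j ji; apply/SRr/Sz.
Qed.

(* Otherwise discarding the eliminable strategies would be a proper
   reduction of M. *)
Lemma maximal_reduction_irreducible (M : forall j, set (E j)) :
  maximal_reduction G P M -> forall i x, M i x -> ~ bigcap_nonempty G P M x.
Proof.
move=> [GM [_ M_max]] i x Mx.
pose M' j := [set y : E j | M j y /\ ~ bigcap_nonempty G P M y].
have M'M : M' = M.
  apply: M_max => [j y [/GM]//|j y []//|]; split=> [j y []//|j y My M'y].
  by apply: contrapT => Py; apply: M'y.
by rewrite -M'M in Mx; case: Mx.
Qed.

Lemma reduces_star_sub (H K : forall j, set (E j)) :
  reduces_star G P H -> pairing G K ->
  (forall Rr : forall j, set (E j), (forall j, H j `<=` Rr j) ->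
     (forall j, K j `<=` Rr j) ->
     forall j (y : E j), K j y -> ~ bigcap_nonempty G P Rr y) ->
  forall j, K j `<=` H j.
Proof.
move=> [len [Rs [Rs0 [Rs_fast Hdef]]]] GK K_kept.
have H_Rs t : in_seq len t -> forall j, H j `<=` Rs t j.
  by move=> lt j y; rewrite Hdef => /(_ t lt).
have K_Rs t : in_seq len t -> forall j, K j `<=` Rs t j.
  elim: t => [|t IHt] lt j y Ky; first by rewrite Rs0; apply: GK.
  have lt' := in_seqS lt; have [[_ Rs_elim] _] := Rs_fast t lt.
  apply: contrapT => /(Rs_elim j y (IHt lt' j y Ky)).
  exact: K_kept (H_Rs t lt') (IHt lt') j y Ky.
by move=> j y Ky; rewrite Hdef => t lt; apply: K_Rs.
Qed.

Lemma maximal_reduction_sub (H M : forall j, set (E j)) :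
  reduces_star G P H -> maximal_reduction G P M -> forall j, M j `<=` H j.
Proof.
move=> GH maxM; apply: reduces_star_sub GH maxM.1 _ => Rr _ MRr j y My.
by move/(bigcap_nonempty_sub MRr); apply: maximal_reduction_irreducible My.
Qed.

Lemma maximal_reduction_unique (M M' : forall j, set (E j)) :
  maximal_reduction G P M -> maximal_reduction G P M' -> M' = M.
Proof.
move=> maxM maxM'; apply: functional_extensionality_dep => j.
by apply/seteqP; split; apply: maximal_reduction_sub; [exact: maxM.2.1| |exact: maxM'.2.1|].
Qed.

Lemma undominated_sub_reduces_star (H : forall j, set (E j)) i (x : E i) :
  reduces_star G P H -> (exists z, in_minus H i z) -> G i x ->
  (forall y, G i y -> ~ succH P H y x) -> H i x.
Proof.
move=> GH H_i Gx x_max.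
pose K j := [set y : E j | [/\ G j y, exists z, in_minus H j z &
                               forall w, G j w -> ~ succH P H w y]].
apply: (reduces_star_sub (K := K)) => // [j y []//|Rr HRr _ j y [_ H_j y_max]].
move=> [w [Gw Pw]]; apply: (y_max w Gw); split=> // z Hz.
by apply: Pw => k ki; apply/HRr/Hz.
Qed.

End Reductions.

Section Domination.
Variables (R : realType) (I : Type) (E : I -> tvsType R).
Variables (G : forall i, set (E i)) (P Q : forall i, profile E -> set (E i)).
Arguments G : clear implicits.
Arguments P : clear implicits.
Arguments Q : clear implicits.
Hypothesis PQ_T : propertyT G P Q.
Hypothesis Q_refl :
  forall i z (y : E i), in_minus G i z -> G i y -> Q i (upd z y) y.
Hypothesis Q_closed : forall i x, in_prod G x -> closed (Q i x).
Hypothesis P_irrefl :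
  forall i z (y : E i), in_minus G i z -> G i y -> ~ P i (upd z y) y.
Variables (H : forall i, set (E i)) (i : I).
Arguments H : clear implicits.
Hypothesis GH : pairing G H.

Lemma P_sub_Q z (a : E i) :
  in_minus G i z -> G i a -> P i (upd z a) `<=` Q i (upd z a).
Proof. by move=> Gz Ga; case: (PQ_T i (in_prod_upd Gz Ga)). Qed.

Lemma propertyT_trans z (a b c : E i) : in_minus G i z -> G i a ->
  P i (upd z a) b -> Q i (upd z b) c -> P i (upd z a) c.
Proof.
move=> Gz Ga Pb Qc; have [_ PQ] := PQ_T i (in_prod_upd Gz Ga).
by move: (PQ b Pb); rewrite upd_upd; apply.
Qed.

Lemma succH_trans (a b c : E i) : G i a -> G i b ->
  succH P H b a -> succH P H c b -> succH P H c a.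
Proof.
move=> Ga Gb [H_i b_a] [_ c_b]; split=> // z Hz.
have Gz := in_minus_pairing GH Hz.
exact: propertyT_trans Gz Ga (b_a z Hz) (P_sub_Q Gz Gb (c_b z Hz)).
Qed.

Lemma succH_irrefl (a : E i) : G i a -> ~ succH P H a a.
Proof. by move=> Ga [[z Hz] a_a]; apply: P_irrefl (in_minus_pairing GH Hz) Ga (a_a z Hz). Qed.

Definition succeqH (b a : E i) := b = a \/ succH P H b a.

Lemma succeqH_trans (a b c : E i) : G i a -> G i b ->
  succeqH b a -> succeqH c b -> succeqH c a.
Proof.
move=> Ga Gb [-> //|b_a] [->|c_b]; right => //.
exact: succH_trans Ga Gb b_a c_b.
Qed.

Definition Qcap (w : E i) := \bigcap_(z in in_minus H i) Q i (upd z w).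

Lemma Qcap_closed (w : E i) : G i w -> closed (Qcap w).
Proof.
move=> Gw; apply: closed_bigI => z Hz.
exact/Q_closed/(in_prod_upd (in_minus_pairing GH Hz) Gw).
Qed.

Lemma succeqH_Qcap (w m : E i) : G i w -> G i m -> succeqH m w -> Qcap w m.
Proof.
move=> Gw Gm m_w z Hz; have Gz := in_minus_pairing GH Hz.
case: m_w => [->|[_ m_w]]; first exact: Q_refl.
exact: P_sub_Q Gz Gw _ (m_w z Hz).
Qed.

Lemma Qcap_succH (a b v : E i) : G i a ->
  succH P H b a -> Qcap b v -> succH P H v a.
Proof.
move=> Ga [H_i b_a] v_b; split=> // z Hz.
exact: propertyT_trans (in_minus_pairing GH Hz) Ga (b_a z Hz) (v_b z Hz).
Qed.

Lemma chain_Qcap_neq0 (D : set (E i)) :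
  compact (G i) -> D `<=` G i -> D !=set0 ->
  total_on D (fun a b => succeqH b a) ->
  \bigcap_(w in D) (G i `&` Qcap w) !=set0.
Proof.
move=> cG DG D0 D_chain; apply: compact_bigcap_neq0 => // [w Dw|D' D'D].
  exact/Qcap_closed/DG.
have D'D_seq w : w \in finmap.enum_fset D' -> D w.
  by move=> wD'; have := D'D w wD'; rewrite in_setE.
have [D'0|D'_neq0] := eqVneq (finmap.enum_fset D') [::].
  by have [a _] := D0; exists a => w wD'; move: (wD' : w \in finmap.enum_fset D'); rewrite D'0.
have [m mD' m_max] : exists2 m, m \in finmap.enum_fset D' &
    forall w, w \in finmap.enum_fset D' -> succeqH m w.
  apply: (total_seq_max (D := D)) => // x y z Dx Dy _ y_x z_y.
  exact: succeqH_trans (DG x Dx) (DG y Dy) y_x z_y.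
exists m => w wD'; have Dw := D'D_seq w wD'; have Gm := DG m (D'D_seq m mD').
by split=> //; apply: succeqH_Qcap (DG w Dw) Gm (m_max w wD').
Qed.

Lemma succH_chain_ub (D : set (E i)) :
  compact (G i) -> D `<=` G i -> D !=set0 ->
  total_on D (fun a b => succeqH b a) ->
  (forall a, D a -> exists2 b, D b & succH P H b a) ->
  exists2 v, G i v & forall a, D a -> succH P H v a.
Proof.
move=> cG DG D0 D_chain D_open.
have [v v_meet] := chain_Qcap_neq0 cG DG D0 D_chain.
have [a0 Da0] := D0; exists v; first by case: (v_meet a0 Da0).
move=> a Da; have [b Db b_a] := D_open a Da.
exact: Qcap_succH (DG a Da) b_a (v_meet b Db).2.
Qed.

Lemma exists_succH_maximal (xi yi : E i) :
  compact (G i) -> G i xi -> G i yi -> succH P H yi xi ->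
  exists xs, [/\ G i xs, succH P H xs xi & forall zi, G i zi -> ~ succH P H zi xs].
Proof.
move=> cG Gxi Gyi yi_xi.
pose T := {a : E i | G i a /\ succH P H a xi}.
pose le (s t : T) := `[< succeqH (sval t) (sval s) >].
have GT (s : T) : G i (sval s) by case: (proj2_sig s).
pose t0 : T := exist _ yi (conj Gyi yi_xi).
have [t t_max] : exists t, premaximal le t.
  apply: (ZL_preorder t0) => [s|r s t /asboolP s_r /asboolP t_s|A A_chain].
  - by apply/asboolP; left.
  - by apply/asboolP; apply: succeqH_trans (GT r) (GT s) s_r t_s.
  have [[m [_ m_max]]|no_max] := pselect (exists m, A m /\ forall s, A s -> le s m).
    by exists m.
  have [[s0 As0]|A0] := pselect (A !=set0); last first.
    by exists t0 => s As; case: A0; exists s.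
  pose D := sval @` A.
  have DG : D `<=` G i by move=> _ [s _ <-].
  have D0 : D !=set0 by exists (sval s0), s0.
  have D_chain : total_on D (fun a b => succeqH b a).
    move=> _ _ [s As <-] [s' As' <-].
    by case: (A_chain s s' As As') => /asboolP; [left|right].
  have D_open a : D a -> exists2 b, D b & succH P H b a.
    move=> [s As <-].
    have [s' As' [/asboolP [e|s'_s] not_le]] := total_on_nomax A_chain no_max As.
      by case: not_le; apply/asboolP; left; rewrite e.
    by exists (sval s'); first exists s'.
  have [v Gv v_ub] := succH_chain_ub cG DG D0 D_chain D_open.
  have v_xi : succH P H v xi.
    by apply: succH_trans Gxi (GT s0) (proj2_sig s0).2 _; apply: v_ub; exists s0.
  exists (exist _ v (conj Gv v_xi)) => s As; apply/asboolP; right.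
  by apply: v_ub; exists s.
exists (sval t); split; [exact: GT|exact: (proj2_sig t).2|move=> zi Gzi zi_t].
have zi_xi := succH_trans Gxi (GT t) (proj2_sig t).2 zi_t.
have /asboolP [e|t_zi] := t_max (exist _ zi (conj Gzi zi_xi)) (asboolT (or_intror zi_t)).
  by move: zi_t; rewrite -[zi]e => /(succH_irrefl (GT t)).
exact: succH_irrefl (GT t) (succH_trans (GT t) Gzi zi_t t_zi).
Qed.

End Domination.

Unset Implicit Arguments. Set Strict Implicit.

Theorem theorem8 (R : realType) (I : Type) (E : I -> tvsType R)
    (G : forall i, set (E i))
    (P Q : forall i, profile E -> set (E i)) :
  (exists i : I, True) ->
  (forall i, hausdorff_space (E i)) ->
  (forall i, compact (G i)) ->
  (forall i, convex_set (G i : set (convex_lmodType (E i)))) ->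
  (forall i x, in_prod G x -> P i x `<=` G i /\ Q i x `<=` G i) ->
  propertyT G P Q ->
  (* (i) *)
  (forall i (x : profile E) (y : E i), in_minus G i x -> G i y -> Q i (upd x y) y) ->
  (* (ii) *)
  (forall i x, in_prod G x ->
     convex_set (Q i x : set (convex_lmodType (E i))) /\ closed (Q i x)) ->
  (* (iii) *)
  (forall i x, in_minus G i x -> LS_majorized (G i) (fun z => P i (upd x z))) ->
  (* (a) *)
  (forall H, pairing G H -> reduces_star G P H ->
     forall i (xi yi : E i), G i xi -> G i yi -> succH P H yi xi ->
     exists xs, H i xs /\ succH P H xs xi /\
       (forall zi, G i zi -> ~ succH P H zi xs)) /\
  (* (b) *)
  (forall M, nonempty_pairing M -> maximal_reduction G P M ->
     forall M', maximal_reduction G P M' -> M' = M).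
Proof.
move=> _ _ cG _ _ PQ_T Q_refl Q_cvx_closed P_maj.
have Q_closed i x (Gx : in_prod G x) : closed (Q i x) := (Q_cvx_closed i x Gx).2.
have P_irrefl i z (y : E i) : in_minus G i z -> G i y -> ~ P i (upd z y) y.
  by move=> Gz; apply: LS_majorized_irrefl (P_maj i z Gz).
split=> [H GH GH_star i xi yi Gxi Gyi yi_xi|M _ maxM M' maxM'].
  have [xs [Gxs xs_xi xs_max]] :=
    exists_succH_maximal PQ_T Q_refl Q_closed P_irrefl GH (cG i) Gxi Gyi yi_xi.
  exists xs; split; last by split.
  exact: undominated_sub_reduces_star GH_star xs_xi.1 Gxs xs_max.
exact: maximal_reduction_unique maxM maxM'.
Qed.
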